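(* An $[n,k]_q$ code $C$ is GI-reducible if and only if $C$ is LCD, or $\dim(\mathrm{Hull}(C)) = 1$ and $x \in \mathrm{Hull}(C)$ satisfies $(x,\mathbf{1}) \neq 0$.
   Context: Let $\mathbb{F}_q$ be a finite field and $C \subseteq \mathbb{F}_q^n$ a linear $[n,k]_q$ code. $(x,y)=\sum_i x_i y_i$ denotes the standard inner product, $\mathbf{1}$ the all-ones vector, $C^\perp$ the dual code with respect to the standard inner product, and $\mathrm{Hull}(C) = C \cap C^\perp$ the hull of $C$; $C$ is LCD if $\mathrm{Hull}(C)=\{0\}$. For a nondegenerate symmetric matrix $M$, a code $C$ with generator matrix $G$ is $M$-LCD if $GMG^T$ is nonsingular, and then $\Pi_{C,M} = MG^T(GMG^T)^{-1}G$ is its $M$-orthogonal projector. Two codes are permutation-equivalent ($C_1 \cong C_2$) if $C_2 = C_1P$ for a permutation matrix $P$, and $\Pi_{C_1,M} \cong \Pi_{C_2,M}$ means $\Pi_{C_2,M} = P^T\Pi_{C_1,M}P$ for some permutation matrix $P$. Let $J$ be the all-ones matrix. A code $C$ is called GI-reducible if there exists a nondegenerate symmetric structure matrix $M = aI + bJ$ (i.e. $a \neq 0$ and $a+nb \neq 0$ in $\mathbb{F}_q$) such that every code in the permutation class of $C$ is $M$-LCD and $C_1 \cong C_2 \iff \Pi_{C_1,M} \cong \Pi_{C_2,M}$ holds for all $C_1, C_2$ in that class. *)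

From HB Require Import structures.
From mathcomp Require Import all_boot all_order all_algebra all_fingroup.
Set Implicit Arguments. Unset Strict Implicit. Unset Printing Implicit Defensive.
Import GRing.Theory.
Local Open Scope ring_scope.

(* A linear [n,k]_q code C is represented by a generator matrix G : 'M[F]_(k,n)
   of full row rank (row_free G); the code itself is the row space of G. *)

Definition ip (F : fieldType) (n : nat) (x y : 'rV[F]_n) : F := (x *m y^T) 0 0.

Definition ones (F : fieldType) (n : nat) : 'rV[F]_n := const_mx 1.

Definition dualc (F : fieldType) (k n : nat) (G : 'M[F]_(k, n)) : 'M[F]_n :=
  kermx G^T.
Definition hull (F : fieldType) (k n : nat) (G : 'M[F]_(k, n)) : 'M[F]_n :=
  (G :&: dualc G)%MS.

Definition LCD (F : fieldType) (k n : nat) (G : 'M[F]_(k, n)) : Prop :=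
  hull G = 0.

Definition structM (F : fieldType) (n : nat) (a b : F) : 'M[F]_n :=
  a%:M + b *: const_mx 1.

Definition M_LCD (F : fieldType) (k n : nat) (M : 'M[F]_n) (G : 'M[F]_(k, n))
  : bool := (G *m M *m G^T) \in unitmx.

Definition proj (F : fieldType) (k n : nat) (M : 'M[F]_n) (G : 'M[F]_(k, n))
  : 'M[F]_n := M *m G^T *m invmx (G *m M *m G^T) *m G.

Definition code_equiv (F : fieldType) (k n : nat) (G1 G2 : 'M[F]_(k, n)) : Prop :=
  exists s : 'S_n, (G2 == G1 *m perm_mx s)%MS.

Definition proj_equiv (F : fieldType) (n : nat) (P1 P2 : 'M[F]_n) : Prop :=
  exists s : 'S_n, P2 = (perm_mx s)^T *m P1 *m perm_mx s.

Definition GI_reducible (F : fieldType) (k n : nat) (G : 'M[F]_(k, n)) : Prop :=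
  exists a b : F,
    [/\ a != 0, a + n%:R * b != 0,
        forall s : 'S_n, M_LCD (structM n a b) (G *m perm_mx s)
      & forall s1 s2 : 'S_n,
          code_equiv (G *m perm_mx s1) (G *m perm_mx s2) <->
          proj_equiv (proj (structM n a b) (G *m perm_mx s1))
                     (proj (structM n a b) (G *m perm_mx s2))].

From HB Require Import structures.
From mathcomp Require Import all_boot all_order all_algebra all_fingroup.
From mathcomp Require Import zify.
Set Implicit Arguments.
Unset Strict Implicit.
Unset Printing Implicit Defensive.

Import GRing.Theory.
Local Open Scope ring_scope.

(* Since J commutes with permutation matrices, the Gram matrix
   G M G^T = a G G^T + b u u^T (u = G 1^T) does not change within the
   permutation class of C, and the projector condition of GI-reducibility
   holds automatically; so C is GI-reducible iff a G G^T + b u u^T is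
   invertible for some admissible a, b.  As G G^T has corank dim Hull(C),
   a rank-one update can make it invertible only if dim Hull(C) <= 1, and
   then exactly when the kernel vector v, with x = v G spanning the hull,
   satisfies v u = (x, 1) <> 0.  The only field where no admissible b <> 0
   exists is F_2 with n odd, and there (x, 1) = (x, x) = 0 for x in the hull. *)

Section RankOneUpdate.
Variable F : fieldType.

Lemma mxrank_add_rank1 m n (A : 'M[F]_(m, n)) (u : 'cV_m) (y : 'rV_n) :
  (\rank (A + u *m y)%R <= \rank A + 1)%N.
Proof.
apply: leq_trans (mxrank_add _ _) _; rewrite leq_add2l.
exact: leq_trans (mxrankM_maxl _ _) (rank_leq_col _).
Qed.

Lemma unitmx_add_rank1 k (A : 'M[F]_k) (u : 'cV_k) (v : 'rV_k) (b : F) :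
  b != 0 -> (v *m u) 0 0 != 0 -> A *m v^T = 0 -> (kermx A <= v)%MS ->
  A + b *: (u *m u^T) \in unitmx.
Proof.
move=> b0 vu0 Av0 kerA; rewrite -row_free_unit -kermx_eq0.
apply/rowV0P => w /sub_kermxP; rewrite mulmxDr -scalemxAr mulmxA => wB0.
have wu0 : w *m u = 0.
  move/(congr1 (mulmx^~ v^T)): wB0.
  rewrite mulmxDl -mulmxA Av0 mulmx0 add0r mul0mx.
  rewrite -scalemxAl -(mulmxA (w *m u)) -trmx_mul.
  rewrite [(v *m u)^T]mx11_scalar mul_mx_scalar scalerA => /eqP.
  by rewrite scalemx_eq0 mulf_eq0 (negbTE b0) mxE (negbTE vu0) => /eqP.
have /sub_rVP [c wE] : (w <= v)%MS.
  by apply: submx_trans kerA; apply/sub_kermxP; rewrite -wB0 wu0 mul0mx scaler0 addr0.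
move/matrixP/(_ 0 0): wu0; rewrite wE -scalemxAl mxE [X in _ = X]mxE => /eqP.
by rewrite mulf_eq0 (negbTE vu0) orbF => /eqP c0; rewrite c0 scale0r.
Qed.

End RankOneUpdate.

Section PermutationClass.
Variables (F : fieldType) (k n : nat) (G : 'M[F]_(k, n)).
Implicit Types (a b : F) (s : 'S_n).

Lemma structM_perm a b s :
  structM n a b *m perm_mx s = perm_mx s *m structM n a b.
Proof.
have J_perm : const_mx 1 *m perm_mx s = const_mx 1 :> 'M[F]_n.
  by rewrite -{1}(invgK s) -col_permE col_perm_const.
have perm_J : perm_mx s *m const_mx 1 = const_mx 1 :> 'M[F]_n.
  by rewrite -row_permE row_perm_const.
rewrite /structM mulmxDl mulmxDr -!scalemxAl -!scalemxAr J_perm perm_J.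
by rewrite mul_scalar_mx mul_mx_scalar.
Qed.

Lemma gram_perm a b s :
  G *m perm_mx s *m structM n a b *m (G *m perm_mx s)^T = G *m structM n a b *m G^T.
Proof.
rewrite trmx_mul -!mulmxA; congr (G *m _).
rewrite mulmxA -structM_perm -mulmxA (mulmxA (perm_mx s)).
by rewrite tr_perm_mx -perm_mxM mulgV perm_mx1 mul1mx.
Qed.

Lemma proj_perm a b s :
  proj (structM n a b) (G *m perm_mx s) =
  (perm_mx s)^T *m proj (structM n a b) G *m perm_mx s.
Proof.
rewrite /proj gram_perm trmx_mul !mulmxA; congr (_ *m _ *m _ *m _).
by rewrite tr_perm_mx structM_perm.
Qed.

Lemma code_equiv_perm s1 s2 : code_equiv (G *m perm_mx s1) (G *m perm_mx s2).
Proof. by exists (s1^-1 * s2)%g; rewrite -mulmxA -perm_mxM mulKVg !submx_refl. Qed.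

Lemma proj_equiv_perm a b s1 s2 :
  proj_equiv (proj (structM n a b) (G *m perm_mx s1))
             (proj (structM n a b) (G *m perm_mx s2)).
Proof.
have s2E : perm_mx s2 = perm_mx s1 *m perm_mx (s1^-1 * s2)%g :> 'M[F]_n.
  by rewrite -perm_mxM mulKVg.
by exists (s1^-1 * s2)%g; rewrite !proj_perm s2E trmx_mul !mulmxA.
Qed.

Lemma GI_reducibleP :
  GI_reducible G <->
  exists a b, [/\ a != 0, a + n%:R * b != 0 & G *m structM n a b *m G^T \in unitmx].
Proof.
split=> [[a [b [a0 ab0 LCD_perm _]]] | [a [b [a0 ab0 uB]]]].
  by exists a, b; split=> //; move: (LCD_perm 1%g); rewrite /M_LCD perm_mx1 mulmx1.
exists a, b; split=> // [s | s1 s2]; first by rewrite /M_LCD gram_perm.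
by split=> _; [apply: proj_equiv_perm | apply: code_equiv_perm].
Qed.

End PermutationClass.

Section InnerProduct.
Variables (F : fieldType) (n : nat).

Lemma ip_mxE (x y : 'rV[F]_n) : x *m y^T = (ip x y)%:M.
Proof. by apply/matrixP => i j; rewrite !ord1 [RHS]mxE eqxx mulr1n. Qed.

Lemma ip_ones_idem (x : 'rV[F]_n) :
  (forall y : F, y * y = y) -> ip x (ones F n) = ip x x.
Proof.
by move=> idF; rewrite /ip !mxE; apply: eq_bigr => i _; rewrite !mxE mulr1 idF.
Qed.

End InnerProduct.

Section Hull.
Variables (F : fieldType) (k n : nat) (G : 'M[F]_(k, n)).

Local Notation u := (G *m (ones F n)^T).

Lemma gram_structM a b :
  G *m structM n a b *m G^T = a *: (G *m G^T) + b *: (u *m u^T).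
Proof.
have J_ones : const_mx 1 = (ones F n)^T *m ones F n :> 'M[F]_n.
  by apply/matrixP => i j; rewrite !mxE big_ord1 !mxE mulr1.
rewrite /structM J_ones mulmxDr mulmxDl mul_mx_scalar -!scalemxAl -scalemxAr.
by rewrite trmx_mul trmxK !mulmxA -scalemxAl.
Qed.

Lemma hullP (x : 'rV[F]_n) :
  reflect (exists2 v : 'rV_k, x = v *m G & v *m (G *m G^T) = 0) (x <= hull G)%MS.
Proof.
rewrite /hull /dualc sub_capmx sub_kermx.
apply: (iffP andP) => [[/submxP [v ->]] | [v -> vA0]].
  by rewrite -mulmxA => /eqP; exists v.
by rewrite submxMl -mulmxA vA0.
Qed.

Lemma ip_hull_self (x : 'rV[F]_n) : (x <= hull G)%MS -> ip x x = 0.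
Proof.
case/hullP => v xE vA0.
rewrite /ip {1}xE -mulmxA -[G *m x^T]trmxK trmx_mul trmxK xE -mulmxA vA0.
by rewrite trmx0 mulmx0 mxE.
Qed.

Lemma mxrank_gram_hull : row_free G -> (\rank (G *m G^T) + \rank (hull G))%N = k.
Proof. by move=> /eqP rG; rewrite /hull /dualc mxrank_mul_ker. Qed.

Lemma mxrank_hull_le1 a b :
  row_free G -> G *m structM n a b *m G^T \in unitmx -> (\rank (hull G) <= 1)%N.
Proof.
move=> rG /mxrank_unit; rewrite gram_structM [b *: _]scalemxAr => rkB.
move: (mxrank_add_rank1 (a *: (G *m G^T)) u (b *: u^T)) (mxrank_gram_hull rG).
by rewrite rkB; have := mxrank_scale a (G *m G^T); lia.
Qed.

Lemma ip_hull_ones_neq0 a b (x : 'rV[F]_n) :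
  G *m structM n a b *m G^T \in unitmx -> (x <= hull G)%MS -> x != 0 ->
  ip x (ones F n) != 0.
Proof.
rewrite -row_free_unit => uB /hullP [v -> vA0]; apply: contraNneq => ip0.
suff /eqP : v *m (G *m structM n a b *m G^T) = 0.
  by rewrite mulmx_free_eq0 // => /eqP ->; rewrite mul0mx.
rewrite gram_structM mulmxDr -!scalemxAr vA0 mulmxA (mulmxA v G) ip_mxE ip0.
by rewrite mul_scalar_mx scale0r !scaler0 addr0.
Qed.

Lemma unitmx_gram_LCD : row_free G -> LCD G -> G *m G^T \in unitmx.
Proof.
move=> rG LCD_G; have := mxrank_gram_hull rG; rewrite LCD_G mxrank0 addn0.
by rewrite -row_free_unit /row_free => ->.
Qed.

Lemma unitmx_gram_hull_rank1 b (x : 'rV[F]_n) :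
  row_free G -> b != 0 -> \rank (hull G) = 1%N -> (x <= hull G)%MS ->
  ip x (ones F n) != 0 -> G *m structM n 1 b *m G^T \in unitmx.
Proof.
move=> rG b0 rk1 xh ip0; have [v xE vA0] := hullP _ xh.
have x0 : x != 0 by apply: contraNneq ip0 => ->; rewrite /ip mul0mx mxE.
have hull_x : (hull G <= x)%MS by rewrite -(mxrank_leqif_sup xh).2 rank_rV x0 rk1.
rewrite gram_structM scale1r; apply: (unitmx_add_rank1 (v := v)) => //.
- by rewrite mulmxA -xE ip_mxE mxE eqxx mulr1n.
- by apply: trmx_inj; rewrite !trmx_mul !trmxK vA0 trmx0.
apply/rV_subP => w /sub_kermxP wA0.
have /sub_rVP [c wGE] : (w *m G <= x)%MS.
  by apply: submx_trans hull_x; apply/hullP; exists w.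
have -> : w = c *: v by apply: (row_free_inj rG); rewrite /= wGE xE scalemxAl.
exact: scalemx_sub.
Qed.

End Hull.

Lemma idempotent_or_structM_weight (F : finFieldType) n :
  (forall y : F, y * y = y) \/ exists2 b : F, b != 0 & 1 + n%:R * b != 0.
Proof.
pose admissible (b : F) := (b != 0) && (1 + n%:R * b != 0).
have [b /andP [b0 nb0] | no_b] := pickP admissible.
  by right; exists b.
left => y; have [-> | y0] := eqVneq y 0; first by rewrite mulr0.
have n1 : n%:R = -1 :> F.
  move: (no_b 1); rewrite /admissible oner_neq0 mulr1 => /negbFE.
  by rewrite addrC addr_eq0 => /eqP.
move: (no_b y); rewrite /admissible y0 n1 mulN1r => /negbFE; rewrite subr_eq0 => /eqP <-.
by rewrite mulr1.
Qed.

Theorem mainTheorem2 (F : finFieldType) (n k : nat) (G : 'M[F]_(k, n)) :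
  row_free G ->
  GI_reducible G <->
  (LCD G \/
   (\rank (hull G) = 1%N /\
    exists x : 'rV[F]_n, (x <= hull G)%MS /\ x != 0 /\ ip x (ones F n) != 0)).
Proof.
move=> rG; rewrite GI_reducibleP; split.
  case=> a [b [_ _ uB]].
  have [hull0 | hull_nz] := eqVneq (hull G) 0; first by left.
  right; split.
    by apply/eqP; rewrite eqn_leq (mxrank_hull_le1 rG uB) lt0n mxrank_eq0.
  have [x xh x0] := rowV0Pn hull_nz.
  by exists x; split; [|split; [|exact: ip_hull_ones_neq0 uB xh x0]].
case=> [LCD_G | [rk1 [x [xh [_ ip0]]]]].
  exists 1, 0; rewrite mulr0 addr0 gram_structM scale1r scale0r addr0 oner_neq0.
  by split=> //; exact: unitmx_gram_LCD.
have [idF | [b b0 nb0]] := idempotent_or_structM_weight F n.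
  by case/eqP: ip0; rewrite ip_ones_idem // (ip_hull_self xh).
by exists 1, b; split; rewrite ?oner_neq0 // (unitmx_gram_hull_rank1 rG b0 rk1 xh ip0).
Qed.
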